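(* Let $\nu\in\mathbb{R}$ and let $(u_1,u_2,u_3)$ satisfy $-\nu<u_3<u_2<u_1$. Put $\gamma=u_1+u_2+u_3+2\nu$. Then for all $i\neq j$ in $\{1,2,3\}$ with $\lambda_i(u_1,u_2,u_3)\neq\lambda_j(u_1,u_2,u_3)$, $$\frac{\partial\lambda_i/\partial u_j}{\lambda_i-\lambda_j}=\frac12\,\frac{(\lambda_i-\gamma)-2(u_i-u_j)}{(\lambda_j-\gamma)(u_i-u_j)}.$$
   Context: For $-\nu<u_3<u_2<u_1$ define $$I(u_1,u_2,u_3)=\int_{u_3}^{u_2}\frac{\eta+\nu}{\sqrt{(\eta+\nu)(u_1-\eta)(u_2-\eta)(\eta-u_3)}}\,d\eta,$$ and for $i=1,2,3$ $$\lambda_i(u_1,u_2,u_3)=u_1+u_2+u_3+2\nu-\frac{I}{\partial I/\partial u_i}.$$ These $\lambda_i$ are the characteristic speeds of the single phase Whitham equations for the Camassa–Holm equation. *)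

From Stdlib Require Import Reals.
From Coquelicot Require Import Coquelicot.
Open Scope R_scope.

(* A point (u1,u2,u3) is represented as a function u : nat -> R, with
   coordinates u 1, u 2, u 3 (other values irrelevant). *)

Definition integrand (nu u1 u2 u3 eta : R) : R :=
  (eta + nu) / sqrt ((eta + nu) * (u1 - eta) * (u2 - eta) * (eta - u3)).

(* I(u1,u2,u3): improper (Riemann) integral from u3 to u2; the integrand has
   integrable inverse-square-root singularities at both endpoints. *)
Definition Iint (nu : R) (u : nat -> R) : R :=
  RInt_gen (integrand nu (u 1%nat) (u 2%nat) (u 3%nat)) (at_right (u 3%nat)) (at_left (u 2%nat)).

Definition upd (u : nat -> R) (j : nat) (t : R) : nat -> R :=
  fun k => if Nat.eqb k j then t else u k.

Definition partial (F : (nat -> R) -> R) (j : nat) (u : nat -> R) : R :=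
  Derive (fun t => F (upd u j t)) (u j).

Definition gamma (nu : R) (u : nat -> R) : R :=
  u 1%nat + u 2%nat + u 3%nat + 2 * nu.

Definition lambda (nu : R) (i : nat) (u : nat -> R) : R :=
  gamma nu u - Iint nu u / partial (Iint nu) i u.

(* The substitution eta = u3 + (u2 - u3) sin^2 theta removes both endpoint
   singularities: I becomes the proper integral of
   2 sqrt (eta + nu) / sqrt (u1 - eta) over theta in [0, pi/2], which can be
   differentiated under the integral sign.  Integrating by parts the
   theta-derivative of w(eta) sin theta cos theta, for suitable w, gives the
   Euler-Poisson-Darboux relations
     2 (u_i - u_j) d_i d_j I = d_i I - d_j I.
   Differentiating lambda_i = gamma - I / d_i I in u_j and eliminating the mixed
   derivative with this relation leaves an algebraic identity; the first
   derivatives d_k I do not vanish because their integrands have constant sign. *)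

From Stdlib Require Import Reals Lra FunctionalExtensionality.
From Coquelicot Require Import Coquelicot.
Open Scope R_scope.

Lemma continuous_pow_comp {U : UniformSpace} (f : U -> R) n x :
  continuous f x -> continuous (fun y => f y ^ n) x.
Proof.
intros Hf; induction n as [|n IH]; simpl.
- apply continuous_const.
- apply (continuous_mult f (fun y => f y ^ n)); assumption.
Qed.

Ltac continuity_step :=
  match goal with
  | |- continuous _ _ => assumption
  | |- continuous (fun _ => ?k) _ => apply continuous_const
  | |- continuous fst _ => apply continuous_fst
  | |- continuous snd _ => apply continuous_snd
  | |- continuous (fun p => fst p) _ => apply continuous_fst
  | |- continuous (fun p => snd p) _ => apply continuous_snd
  | |- continuous (fun p => p) _ => apply continuous_id
  | |- continuous (fun y => ?f + ?g) _ => apply (continuous_plus (fun y => f) (fun y => g))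
  | |- continuous (fun y => ?f - ?g) _ => apply (continuous_minus (fun y => f) (fun y => g))
  | |- continuous (fun y => - ?f) _ => apply (continuous_opp (fun y => f))
  | |- continuous (fun y => ?f * ?g) _ => apply (continuous_mult (fun y => f) (fun y => g))
  | |- continuous (fun y => ?f / ?g) _ => apply (continuous_mult (fun y => f) (fun y => / g))
  | |- continuous (fun y => / ?f) _ =>
      apply (continuous_comp (fun y => f) Rinv); [| apply continuous_Rinv]
  | |- continuous (fun y => sqrt ?f) _ =>
      apply (continuous_comp (fun y => f) sqrt); [| apply continuous_sqrt]
  | |- continuous (fun y => sin ?f) _ =>
      apply (continuous_comp (fun y => f) sin); [| apply continuous_sin]
  | |- continuous (fun y => cos ?f) _ =>
      apply (continuous_comp (fun y => f) cos); [| apply continuous_cos]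
  | |- continuous (fun y => ?f ^ ?n) _ =>
      apply (continuous_pow_comp (fun y => f) n)
  | |- continuous (fun y => ?A y) _ => solve [eauto]
  end.

Ltac solve_continuous := repeat continuity_step.

Lemma is_derive_val (f : R -> R) x d d' : is_derive f x d -> d = d' -> is_derive f x d'.
Proof. now intros H <-. Qed.

Lemma is_derive_RInt_param_continuous (f df : R -> R -> R) (x a b : R) :
  locally x (fun y => forall t, is_derive (fun z => f z t) y (df y t)) ->
  (forall t, continuous (fun p : R * R => df (fst p) (snd p)) (x, t)) ->
  locally x (fun y => forall t, continuous (f y) t) ->
  is_derive (fun y => RInt (f y) a b) x (RInt (df x) a b).
Proof.
intros Hd Hc Hf.
assert (HD : locally x (fun y => forall t, Derive (fun z => f z t) y = df y t)).
{ apply filter_imp with (2 := Hd); intros y Hy t; apply is_derive_unique, Hy. }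
assert (HDx : forall t, Derive (fun z => f z t) x = df x t)
  by (destruct HD as [e He]; apply He, ball_center).
rewrite <- (RInt_ext (fun t => Derive (fun z => f z t) x)) by (intros; apply HDx).
apply is_derive_RInt_param.
- apply filter_imp with (2 := Hd); intros y Hy t _; eexists; apply Hy.
- intros t _; apply continuity_2d_pt_filterlim; rewrite HDx.
  apply filterlim_ext_loc with (f := fun z : R * R => df (fst z) (snd z)); [| apply Hc].
  assert (Hl := continuous_fst (U := R_UniformSpace) (V := R_UniformSpace) x t _ HD).
  unfold filtermap in Hl; eapply filter_imp; [| exact Hl].
  intros z Hz; symmetry; apply Hz.
- apply filter_imp with (2 := Hf); intros y Hy.
  apply (ex_RInt_continuous (V := R_CompleteNormedModule)); intros; apply Hy.
Qed.

Lemma is_derive_mult_const_r (f : R -> R) (x d k : R) :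
  is_derive f x d -> is_derive (fun z => f z * k) x (d * k).
Proof. exact (is_derive_scal_l f x d k). Qed.

Lemma RInt_antiderivative_vanishing (f W : R -> R) a b :
  (forall t, is_derive W t (f t)) -> (forall t, continuous f t) ->
  W a = 0 -> W b = 0 -> RInt f a b = 0.
Proof.
intros Hd Hc Ha Hb.
rewrite (is_RInt_unique (V := R_CompleteNormedModule) f a b (minus (W b) (W a))).
- rewrite Ha, Hb; unfold minus, plus, opp; simpl; ring.
- apply (is_RInt_derive (V := R_CompleteNormedModule)); auto.
Qed.

Lemma RInt_lincomb3 (f g h : R -> R) k a b :
  (forall t, continuous f t) -> (forall t, continuous g t) -> (forall t, continuous h t) ->
  k * RInt f a b - RInt g a b + RInt h a b = RInt (fun t => k * f t - g t + h t) a b.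
Proof.
intros Hf Hg Hh.
assert (Hint : forall F : R -> R, (forall t, continuous F t) -> ex_RInt F a b)
  by (intros F HF; apply (ex_RInt_continuous (V := R_CompleteNormedModule)); auto).
rewrite (RInt_plus (V := R_CompleteNormedModule) (fun t => k * f t - g t) h);
  [| apply Hint; intros; solve_continuous | apply Hint; auto].
rewrite (RInt_minus (V := R_CompleteNormedModule) (fun t => k * f t) g);
  [| apply Hint; intros; solve_continuous | apply Hint; auto].
rewrite (RInt_scal (V := R_CompleteNormedModule) f a b k (Hint f Hf)
          : RInt (fun t => k * f t) a b = k * RInt f a b).
reflexivity.
Qed.

Lemma cos_sq t : cos t ^ 2 = 1 - sin t ^ 2.
Proof. rewrite <- (sin2_cos2 t); unfold Rsqr; ring. Qed.

Lemma ratio_in_unit p q : 0 < p < q -> 0 < p / q < 1.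
Proof.
intros Hpq; split; [apply Rdiv_lt_0_compat; lra |].
apply (Rmult_lt_reg_r q); [lra |]; unfold Rdiv; rewrite Rmult_assoc, Rinv_l; lra.
Qed.

Lemma asin_sqrt_range r : 0 < r < 1 -> 0 < asin (sqrt r) < PI / 2.
Proof.
intros Hr.
assert (Hs : 0 < sqrt r < 1)
  by (split; [apply sqrt_lt_R0 | rewrite <- sqrt_1; apply sqrt_lt_1]; lra).
destruct (asin_bound_lt (sqrt r)) as [Hlo Hup]; [lra |]; split; [| exact Hup].
destruct (Rlt_le_dec 0 (asin (sqrt r))) as [| Hle]; [assumption | exfalso].
assert (Hsin : 0 <= sin (- asin (sqrt r))) by (apply sin_ge_0; pose proof PI_RGT_0; lra).
rewrite sin_neg, sin_asin in Hsin; lra.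
Qed.

Lemma sin_asin_sqrt_sq r : 0 <= r <= 1 -> sin (asin (sqrt r)) ^ 2 = r.
Proof.
intros Hr; rewrite sin_asin.
- simpl; rewrite Rmult_1_r; apply sqrt_sqrt; lra.
- pose proof (sqrt_pos r); split; [lra |]; rewrite <- sqrt_1; apply sqrt_le_1; lra.
Qed.

Lemma continuous_asin_sqrt_ratio_0 (f : R -> R) x :
  continuous f x -> f x = 0 -> continuous (fun y => asin (sqrt (f y))) x.
Proof.
intros Hf Hfx.
apply (continuous_comp (fun y => sqrt (f y)) asin); [solve_continuous |].
rewrite Hfx, sqrt_0; apply continuity_pt_filterlim, derivable_continuous_pt, derivable_pt_asin; lra.
Qed.

Lemma filterlim_within_continuous (f : R -> R) (D : R -> Prop) x :
  continuous f x -> filterlim f (within D (locally x)) (locally (f x)).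
Proof.
intros Hc P HP; specialize (Hc P HP); unfold filtermap, within in *.
apply filter_imp with (2 := Hc); auto.
Qed.

Lemma filter_prod_locally (x y : R) (P : R * R -> Prop) :
  locally (x, y) P -> filter_prod (locally x) (locally y) P.
Proof.
intros [e He]; exists (ball x e) (ball y e); try (exists e; auto).
intros u v Hu Hv; apply He; split; auto.
Qed.

Lemma between_min_max l h x1 x2 y :
  l < x1 < h -> l < x2 < h -> Rmin x1 x2 <= y <= Rmax x1 x2 -> l < y < h.
Proof. unfold Rmin, Rmax; destruct (Rle_dec x1 x2); lra. Qed.

Section Kernel.
Variable nu : R.

(* [kernel] is the integrand of [I] after the substitution
   [eta = c + (b - c) sin^2 theta]; the other four are its partial derivatives. *)
Definition kernel a e := 2 * sqrt (e + nu) / sqrt (a - e).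
Definition kernel_a a e := - sqrt (e + nu) / sqrt (a - e) ^ 3.
Definition kernel_e a e := (a + nu) / (sqrt (e + nu) * sqrt (a - e) ^ 3).
Definition kernel_ae a e :=
  - ((a - e) + 3 * (e + nu)) / (2 * sqrt (e + nu) * sqrt (a - e) ^ 5).
Definition kernel_ee a e :=
  (a + nu) * (3 * (e + nu) - (a - e)) / (2 * sqrt (e + nu) ^ 3 * sqrt (a - e) ^ 5).

(* Name P = sqrt (e + nu), Q = sqrt (a - e); the identity then becomes a
   rational one in P and Q. *)
Ltac kernel_field a e :=
  let P := fresh "P" in let Q := fresh "Q" in
  replace (a + - e) with (a - e) in * by ring;
  assert (HP : sqrt (e + nu) * sqrt (e + nu) = e + nu) by (apply sqrt_sqrt; lra);
  assert (HQ : sqrt (a - e) * sqrt (a - e) = a - e) by (apply sqrt_sqrt; lra);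
  assert (P0 : 0 < sqrt (e + nu)) by (apply sqrt_lt_R0; lra);
  assert (Q0 : 0 < sqrt (a - e)) by (apply sqrt_lt_R0; lra);
  set (P := sqrt (e + nu)) in *; set (Q := sqrt (a - e)) in *;
  try replace (a + nu) with (P * P + Q * Q) by lra;
  try replace (a - e) with (Q * Q) by lra;
  try replace (e + nu) with (P * P) by lra;
  field; lra.

Ltac kernel_derive a e :=
  auto_derive;
  [ repeat split; try lra; apply Rgt_not_eq; repeat first
      [ apply Rmult_lt_0_compat | apply pow_lt | apply sqrt_lt_R0 | lra ]
  | kernel_field a e ].

Section Point.
Variables a e : R.
Hypotheses (He : 0 < e + nu) (Hae : 0 < a - e).

Lemma is_derive_kernel_a : is_derive (fun z => kernel z e) a (kernel_a a e).
Proof. unfold kernel, kernel_a; kernel_derive a e. Qed.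

Lemma is_derive_kernel_e : is_derive (fun z => kernel a z) e (kernel_e a e).
Proof. unfold kernel, kernel_e; kernel_derive a e. Qed.

Lemma is_derive_kernel_a_e : is_derive (fun z => kernel_a a z) e (kernel_ae a e).
Proof. unfold kernel_a, kernel_ae; kernel_derive a e. Qed.

Lemma is_derive_kernel_e_a : is_derive (fun z => kernel_e z e) a (kernel_ae a e).
Proof. unfold kernel_e, kernel_ae; kernel_derive a e. Qed.

Lemma is_derive_kernel_e_e : is_derive (fun z => kernel_e a z) e (kernel_ee a e).
Proof. unfold kernel_e, kernel_ee; kernel_derive a e. Qed.

Lemma kernel_e_eq : kernel_e a e = 2 * kernel_a a e - 2 * (a - e) * kernel_ae a e.
Proof. unfold kernel_e, kernel_a, kernel_ae; kernel_field a e. Qed.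

Lemma kernel_a_neg : kernel_a a e < 0.
Proof.
unfold kernel_a, Rdiv; rewrite Ropp_mult_distr_l_reverse; apply Ropp_lt_gt_0_contravar.
apply Rmult_lt_0_compat; [| apply Rinv_0_lt_compat, pow_lt]; apply sqrt_lt_R0; lra.
Qed.

Lemma kernel_e_pos : 0 < kernel_e a e.
Proof.
unfold kernel_e; apply Rdiv_lt_0_compat; [lra |].
apply Rmult_lt_0_compat; [| apply pow_lt]; apply sqrt_lt_R0; lra.
Qed.

End Point.

Definition continuous_in_domain (g : R -> R -> R) :=
  forall a e, 0 < e + nu -> 0 < a - e ->
  continuous (fun p : R * R => g (fst p) (snd p)) (a, e).

Ltac kernel_continuous :=
  intros a e He Hae; solve_continuous; simpl; apply Rgt_not_eq;
  repeat first [ apply Rmult_lt_0_compat | apply pow_lt | apply sqrt_lt_R0 | lra ].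

Lemma continuous_kernel : continuous_in_domain kernel.
Proof. unfold kernel; kernel_continuous. Qed.

Lemma continuous_kernel_a : continuous_in_domain kernel_a.
Proof. unfold kernel_a; kernel_continuous. Qed.

Lemma continuous_kernel_e : continuous_in_domain kernel_e.
Proof. unfold kernel_e; kernel_continuous. Qed.

Lemma continuous_kernel_ae : continuous_in_domain kernel_ae.
Proof. unfold kernel_ae; kernel_continuous. Qed.

Lemma continuous_kernel_ee : continuous_in_domain kernel_ee.
Proof. unfold kernel_ee; kernel_continuous. Qed.

End Kernel.

Definition eta b c t := c + (b - c) * sin t ^ 2.

Definition admissible nu a b c := -nu < b /\ -nu < c /\ b < a /\ c < a.

Lemma eta_in_domain nu a b c t :
  admissible nu a b c -> 0 < eta b c t + nu /\ 0 < a - eta b c t.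
Proof.
intros (Hb & Hc & Hba & Hca); unfold eta.
pose proof (pow2_ge_0 (sin t)); pose proof (pow2_ge_0 (cos t)); pose proof (cos_sq t).
destruct (Rle_lt_dec b c).
- assert (0 <= (c - b) * sin t ^ 2) by (apply Rmult_le_pos; lra).
  assert (0 <= (c - b) * cos t ^ 2) by (apply Rmult_le_pos; lra).
  split; nra.
- assert (0 <= (b - c) * sin t ^ 2) by (apply Rmult_le_pos; lra).
  assert (0 <= (b - c) * cos t ^ 2) by (apply Rmult_le_pos; lra).
  split; nra.
Qed.

Lemma locally_admissible_a nu a b c :
  admissible nu a b c -> locally a (fun z => admissible nu z b c).
Proof.
intros (Hb & Hc & Hba & Hca).
apply filter_imp with (2 := filter_and _ _ (open_gt b a Hba) (open_gt c a Hca)).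
intros z [? ?]; repeat split; lra.
Qed.

Lemma locally_admissible_b nu a b c :
  admissible nu a b c -> locally b (fun z => admissible nu a z c).
Proof.
intros (Hb & Hc & Hba & Hca).
apply filter_imp with (2 := filter_and _ _ (open_gt (-nu) b Hb) (open_lt a b Hba)).
intros z [? ?]; repeat split; lra.
Qed.

Lemma locally_admissible_c nu a b c :
  admissible nu a b c -> locally c (fun z => admissible nu a b z).
Proof.
intros (Hb & Hc & Hba & Hca).
apply filter_imp with (2 := filter_and _ _ (open_gt (-nu) c Hc) (open_lt a c Hca)).
intros z [? ?]; repeat split; lra.
Qed.

Lemma is_derive_eta_b (h : R -> R) (h' b c t : R) :
  is_derive h (eta b c t) h' -> is_derive (fun z => h (eta z c t)) b (h' * sin t ^ 2).
Proof.
intros H; eapply is_derive_val.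
- apply (is_derive_comp h (fun z => eta z c t)); [exact H |].
  unfold eta; auto_derive; [exact I | reflexivity].
- unfold scal; simpl; unfold mult; simpl; ring.
Qed.

Lemma is_derive_eta_c (h : R -> R) (h' b c t : R) :
  is_derive h (eta b c t) h' -> is_derive (fun z => h (eta b z t)) c (h' * cos t ^ 2).
Proof.
intros H; eapply is_derive_val.
- apply (is_derive_comp h (fun z => eta b z t)); [exact H |].
  unfold eta; auto_derive; [exact I | reflexivity].
- rewrite cos_sq; unfold scal; simpl; unfold mult; simpl; ring.
Qed.

Lemma is_derive_eta_t (h : R -> R) (h' b c t : R) :
  is_derive h (eta b c t) h' ->
  is_derive (fun z => h (eta b c z)) t (h' * ((b - c) * (2 * sin t * cos t))).
Proof.
intros H; eapply is_derive_val.
- apply (is_derive_comp h (eta b c)); [exact H |].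
  unfold eta; auto_derive; [exact I | reflexivity].
- unfold scal; simpl; unfold mult; simpl; ring.
Qed.

Definition eta_integral (g : R -> R -> R) (w : R -> R) a b c :=
  RInt (fun t => g a (eta b c t) * w t) 0 (PI / 2).

Lemma continuous_eta_integrand {U : UniformSpace} nu g w (A B C T : U -> R) x :
  continuous_in_domain nu g -> continuous w (T x) ->
  continuous A x -> continuous B x -> continuous C x -> continuous T x ->
  admissible nu (A x) (B x) (C x) ->
  continuous (fun y => g (A y) (eta (B y) (C y) (T y)) * w (T y)) x.
Proof.
intros Hg Hw HA HB HC HT Hadm.
destruct (eta_in_domain nu _ _ _ (T x) Hadm) as [E1 E2].
apply (continuous_mult (fun y => g (A y) (eta (B y) (C y) (T y))) (fun y => w (T y))).
- apply (continuous_comp_2 A (fun y => eta (B y) (C y) (T y)) g); auto.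
  unfold eta; solve_continuous.
- apply (continuous_comp T w); auto.
Qed.

Lemma continuous_eta_integrand_t nu g w a b c :
  continuous_in_domain nu g -> (forall t, continuous w t) -> admissible nu a b c ->
  forall t, continuous (fun t => g a (eta b c t) * w t) t.
Proof.
intros Hg Hw Hadm t.
apply (continuous_eta_integrand nu g w (fun _ => a) (fun _ => b) (fun _ => c) (fun t => t));
  auto; solve_continuous.
Qed.

Lemma eta_integral_ext_weight g w w' a b c :
  (forall t, w t = w' t) -> eta_integral g w a b c = eta_integral g w' a b c.
Proof. intros Hw; apply RInt_ext; intros t _; now rewrite Hw. Qed.

Section EtaIntegralDerivatives.
Variables (nu : R) (g : R -> R -> R) (w : R -> R) (a b c : R).
Hypotheses (Hg : continuous_in_domain nu g) (Hw : forall t, continuous w t)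
  (Hadm : admissible nu a b c).

Lemma is_derive_eta_integral_a ga :
  continuous_in_domain nu ga ->
  (forall a e, 0 < e + nu -> 0 < a - e -> is_derive (fun z => g z e) a (ga a e)) ->
  is_derive (fun z => eta_integral g w z b c) a (eta_integral ga w a b c).
Proof.
intros Hga Hd; unfold eta_integral.
apply (is_derive_RInt_param_continuous (fun z t => g z (eta b c t) * w t)
                                      (fun z t => ga z (eta b c t) * w t)).
- apply filter_imp with (2 := locally_admissible_a _ _ _ _ Hadm); intros y Hy t.
  destruct (eta_in_domain nu y b c t Hy) as [E1 E2].
  apply is_derive_mult_const_r, Hd; auto.
- intros t.
  apply (continuous_eta_integrand nu ga w fst (fun _ => b) (fun _ => c) snd (a, t));
    auto; solve_continuous.
- apply filter_imp with (2 := locally_admissible_a _ _ _ _ Hadm); intros y Hy.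
  apply (continuous_eta_integrand_t nu); auto.
Qed.

Lemma is_derive_eta_integral_b ge :
  continuous_in_domain nu ge ->
  (forall a e, 0 < e + nu -> 0 < a - e -> is_derive (fun z => g a z) e (ge a e)) ->
  is_derive (fun z => eta_integral g w a z c) b
    (eta_integral ge (fun t => sin t ^ 2 * w t) a b c).
Proof.
intros Hge Hd; unfold eta_integral.
apply (is_derive_RInt_param_continuous (fun z t => g a (eta z c t) * w t)
                                      (fun z t => ge a (eta z c t) * (sin t ^ 2 * w t))).
- apply filter_imp with (2 := locally_admissible_b _ _ _ _ Hadm); intros y Hy t.
  destruct (eta_in_domain nu a y c t Hy) as [E1 E2].
  eapply is_derive_val; [apply is_derive_mult_const_r, is_derive_eta_b, Hd; auto |].
  apply Rmult_assoc.
- intros t.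
  apply (continuous_eta_integrand nu ge (fun t => sin t ^ 2 * w t)
           (fun _ => a) fst (fun _ => c) snd (b, t)); auto; solve_continuous.
- apply filter_imp with (2 := locally_admissible_b _ _ _ _ Hadm); intros y Hy.
  apply (continuous_eta_integrand_t nu); auto.
Qed.

Lemma is_derive_eta_integral_c ge :
  continuous_in_domain nu ge ->
  (forall a e, 0 < e + nu -> 0 < a - e -> is_derive (fun z => g a z) e (ge a e)) ->
  is_derive (fun z => eta_integral g w a b z) c
    (eta_integral ge (fun t => cos t ^ 2 * w t) a b c).
Proof.
intros Hge Hd; unfold eta_integral.
apply (is_derive_RInt_param_continuous (fun z t => g a (eta b z t) * w t)
                                      (fun z t => ge a (eta b z t) * (cos t ^ 2 * w t))).
- apply filter_imp with (2 := locally_admissible_c _ _ _ _ Hadm); intros y Hy t.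
  destruct (eta_in_domain nu a b y t Hy) as [E1 E2].
  eapply is_derive_val; [apply is_derive_mult_const_r, is_derive_eta_c, Hd; auto |].
  apply Rmult_assoc.
- intros t.
  apply (continuous_eta_integrand nu ge (fun t => cos t ^ 2 * w t)
           (fun _ => a) (fun _ => b) fst snd (c, t)); auto; solve_continuous.
- apply filter_imp with (2 := locally_admissible_c _ _ _ _ Hadm); intros y Hy.
  apply (continuous_eta_integrand_t nu); auto.
Qed.

End EtaIntegralDerivatives.

Lemma eta_integral_pos nu g w a b c :
  continuous_in_domain nu g -> (forall t, continuous w t) -> admissible nu a b c ->
  (forall a e, 0 < e + nu -> 0 < a - e -> 0 < g a e) ->
  (forall t, 0 < t < PI / 2 -> 0 < w t) ->
  0 < eta_integral g w a b c.
Proof.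
intros Hg Hw Hadm Hgpos Hwpos; pose proof PI_RGT_0.
apply RInt_gt_0; [lra | | intros; apply (continuous_eta_integrand_t nu); auto].
intros t Ht; destruct (eta_in_domain nu a b c t Hadm).
apply Rmult_lt_0_compat; auto.
Qed.

Lemma eta_integral_neg nu g w a b c :
  continuous_in_domain nu g -> (forall t, continuous w t) -> admissible nu a b c ->
  (forall a e, 0 < e + nu -> 0 < a - e -> g a e < 0) ->
  (forall t, 0 < t < PI / 2 -> 0 < w t) ->
  eta_integral g w a b c < 0.
Proof.
intros Hg Hw Hadm Hgneg Hwpos; pose proof PI_RGT_0.
replace 0 with (RInt (fun _ => 0) 0 (PI / 2))
  by (rewrite (RInt_const (V := R_CompleteNormedModule)); apply Rmult_0_r).
apply RInt_lt; [lra | intros; apply continuous_const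
               | intros; apply (continuous_eta_integrand_t nu); auto |].
intros t Ht; destruct (eta_in_domain nu a b c t Hadm).
rewrite <- (Rmult_0_l (w t)); apply Rmult_lt_compat_r; auto.
Qed.

Lemma is_derive_eta_sin_cos (h : R -> R) (h' b c t : R) :
  is_derive h (eta b c t) h' ->
  is_derive (fun z => h (eta b c z) * sin z * cos z) t
    (2 * (b - c) * h' * (sin t ^ 2 * cos t ^ 2) + h (eta b c t) * (cos t ^ 2 - sin t ^ 2)).
Proof.
intros H; eapply is_derive_val.
- apply (is_derive_mult (fun z => h (eta b c z) * sin z) cos);
    [apply (is_derive_mult (fun z => h (eta b c z)) sin) |
     apply is_derive_cos | apply Rmult_comm];
    [apply is_derive_eta_t, H | apply is_derive_sin | apply Rmult_comm].
- unfold plus, mult; simpl; ring.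
Qed.

Lemma eta_integral_by_parts nu a b c k g1 g2 g3 w1 w2 w3 (W : R -> R) :
  admissible nu a b c ->
  continuous_in_domain nu g1 -> continuous_in_domain nu g2 -> continuous_in_domain nu g3 ->
  (forall t, continuous w1 t) -> (forall t, continuous w2 t) -> (forall t, continuous w3 t) ->
  (forall t, is_derive W t (k * (g1 a (eta b c t) * w1 t)
                            - g2 a (eta b c t) * w2 t + g3 a (eta b c t) * w3 t)) ->
  W 0 = 0 -> W (PI / 2) = 0 ->
  k * eta_integral g1 w1 a b c = eta_integral g2 w2 a b c - eta_integral g3 w3 a b c.
Proof.
intros Hadm Hg1 Hg2 Hg3 Hw1 Hw2 Hw3 HW HW0 HW1; unfold eta_integral.
enough (k * RInt (fun t => g1 a (eta b c t) * w1 t) 0 (PI / 2)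
        - RInt (fun t => g2 a (eta b c t) * w2 t) 0 (PI / 2)
        + RInt (fun t => g3 a (eta b c t) * w3 t) 0 (PI / 2) = 0) by lra.
rewrite RInt_lincomb3 by (apply (continuous_eta_integrand_t nu); auto).
apply (RInt_antiderivative_vanishing _ W); auto.
intros t.
pose proof (continuous_eta_integrand_t nu g1 w1 a b c Hg1 Hw1 Hadm t).
pose proof (continuous_eta_integrand_t nu g2 w2 a b c Hg2 Hw2 Hadm t).
pose proof (continuous_eta_integrand_t nu g3 w3 a b c Hg3 Hw3 Hadm t).
solve_continuous.
Qed.

Section EulerPoissonDarboux.
Variables nu a b c : R.
Hypothesis Hadm : admissible nu a b c.

Ltac weight_continuous := solve [intros; solve_continuous].
Ltac endpoint := first [rewrite sin_0 | rewrite cos_PI2]; ring.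

Lemma epd_ab :
  2 * (a - b) * eta_integral (kernel_ae nu) (fun t => sin t ^ 2) a b c =
  eta_integral (kernel_a nu) (fun _ => 1) a b c
  - eta_integral (kernel_e nu) (fun t => sin t ^ 2) a b c.
Proof.
apply (eta_integral_by_parts nu a b c _ _ _ _ _ _ _
         (fun z => - kernel_a nu a (eta b c z) * sin z * cos z));
  auto using continuous_kernel_a, continuous_kernel_e, continuous_kernel_ae;
  try weight_continuous; try endpoint.
intros t; destruct (eta_in_domain nu a b c t Hadm).
eapply is_derive_val.
- apply (is_derive_eta_sin_cos (fun e => - kernel_a nu a e)).
  apply (is_derive_opp (kernel_a nu a)), is_derive_kernel_a_e; assumption.
- rewrite (kernel_e_eq nu a (eta b c t)), cos_sq by assumption; unfold eta, opp; simpl; ring.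
Qed.

Lemma epd_ac :
  2 * (a - c) * eta_integral (kernel_ae nu) (fun t => cos t ^ 2) a b c =
  eta_integral (kernel_a nu) (fun _ => 1) a b c
  - eta_integral (kernel_e nu) (fun t => cos t ^ 2) a b c.
Proof.
apply (eta_integral_by_parts nu a b c _ _ _ _ _ _ _
         (fun z => kernel_a nu a (eta b c z) * sin z * cos z));
  auto using continuous_kernel_a, continuous_kernel_e, continuous_kernel_ae;
  try weight_continuous; try endpoint.
intros t; destruct (eta_in_domain nu a b c t Hadm).
eapply is_derive_val.
- apply is_derive_eta_sin_cos, is_derive_kernel_a_e; assumption.
- rewrite (kernel_e_eq nu a (eta b c t)), cos_sq by assumption; unfold eta; simpl; ring.
Qed.

Lemma epd_bc :
  2 * (b - c) * eta_integral (kernel_ee nu) (fun t => sin t ^ 2 * cos t ^ 2) a b c =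
  eta_integral (kernel_e nu) (fun t => sin t ^ 2) a b c
  - eta_integral (kernel_e nu) (fun t => cos t ^ 2) a b c.
Proof.
apply (eta_integral_by_parts nu a b c _ _ _ _ _ _ _
         (fun z => kernel_e nu a (eta b c z) * sin z * cos z));
  auto using continuous_kernel_e, continuous_kernel_ee;
  try weight_continuous; try endpoint.
intros t; destruct (eta_in_domain nu a b c t Hadm).
eapply is_derive_val.
- apply is_derive_eta_sin_cos, is_derive_kernel_e_e; assumption.
- simpl; ring.
Qed.

End EulerPoissonDarboux.

Section Substitution.
Variables nu a b c : R.
Hypotheses (Hc : -nu < c) (Hcb : c < b) (Hba : b < a).

Lemma admissible_ordered : admissible nu a b c.
Proof. repeat split; lra. Qed.

Lemma integrand_eta t :
  0 < t < PI / 2 ->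
  (b - c) * (2 * sin t * cos t) * integrand nu a b c (eta b c t) = kernel nu a (eta b c t) * 1.
Proof.
intros Ht.
assert (Hs : 0 < sin t) by (apply sin_gt_0; lra).
assert (Hco : 0 < cos t) by (apply cos_gt_0; lra).
destruct (eta_in_domain nu a b c t admissible_ordered) as [E1 E2].
assert (HP : sqrt (eta b c t + nu) * sqrt (eta b c t + nu) = eta b c t + nu)
  by (apply sqrt_sqrt; lra).
assert (HQ : sqrt (a - eta b c t) * sqrt (a - eta b c t) = a - eta b c t)
  by (apply sqrt_sqrt; lra).
assert (P0 : 0 < sqrt (eta b c t + nu)) by (apply sqrt_lt_R0; lra).
assert (Q0 : 0 < sqrt (a - eta b c t)) by (apply sqrt_lt_R0; lra).
assert (Hb : b - eta b c t = (b - c) * cos t ^ 2) by (unfold eta; rewrite cos_sq; ring).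
assert (Hcc : eta b c t - c = (b - c) * sin t ^ 2) by (unfold eta; ring).
unfold integrand, kernel; rewrite Hb, Hcc.
set (e := eta b c t) in *; set (P := sqrt (e + nu)) in *; set (Q := sqrt (a - e)) in *.
rewrite <- HP at 1 2; rewrite <- HQ.
replace (P * P * (Q * Q) * ((b - c) * cos t ^ 2) * ((b - c) * sin t ^ 2))
  with ((P * Q * (b - c) * sin t * cos t) ^ 2) by ring.
rewrite sqrt_pow2 by (apply Rlt_le; repeat apply Rmult_lt_0_compat; lra).
field; repeat split; apply Rgt_not_eq; lra.
Qed.

Lemma eta_between t : 0 < t < PI / 2 -> c < eta b c t < b.
Proof.
intros Ht.
assert (0 < sin t ^ 2) by (apply pow_lt, sin_gt_0; lra).
assert (0 < cos t ^ 2) by (apply pow_lt, cos_gt_0; lra).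
pose proof (cos_sq t); unfold eta; split; nra.
Qed.

Lemma continuous_integrand x : c < x < b -> continuous (integrand nu a b c) x.
Proof.
intros Hx; unfold integrand; solve_continuous.
apply Rgt_not_eq, sqrt_lt_R0; repeat apply Rmult_lt_0_compat; lra.
Qed.

Lemma RInt_integrand_eta t1 t2 :
  0 < t1 < PI / 2 -> 0 < t2 < PI / 2 ->
  RInt (fun t => kernel nu a (eta b c t) * 1) t1 t2 =
  RInt (integrand nu a b c) (eta b c t1) (eta b c t2).
Proof.
intros H1 H2.
rewrite <- (RInt_comp (V := R_CompleteNormedModule) (integrand nu a b c) (eta b c)
              (fun t => (b - c) * (2 * sin t * cos t))).
- apply RInt_ext; intros t Ht; symmetry; apply integrand_eta.
  apply (between_min_max 0 (PI / 2) t1 t2); auto; lra.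
- intros t Ht; apply continuous_integrand, eta_between.
  apply (between_min_max 0 (PI / 2) t1 t2); auto.
- intros t _; split; [unfold eta; auto_derive; [exact I | ring] | solve_continuous].
Qed.

(* Two inverses of [eta], one per endpoint: [asin] is only known to be
   continuous inside (-1, 1). *)
Definition theta_c x := asin (sqrt ((x - c) / (b - c))).
Definition theta_b x := PI / 2 - asin (sqrt ((b - x) / (b - c))).

Lemma theta_c_range x : c < x < b -> 0 < theta_c x < PI / 2.
Proof. intros; apply asin_sqrt_range, ratio_in_unit; lra. Qed.

Lemma theta_b_range x : c < x < b -> 0 < theta_b x < PI / 2.
Proof.
intros; unfold theta_b.
pose proof (asin_sqrt_range ((b - x) / (b - c)) (ratio_in_unit (b - x) (b - c) ltac:(lra))); lra.
Qed.

Lemma eta_theta_c x : c < x < b -> eta b c (theta_c x) = x.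
Proof.
intros Hx; pose proof (ratio_in_unit (x - c) (b - c) ltac:(lra)).
unfold eta, theta_c; rewrite sin_asin_sqrt_sq by lra; field; lra.
Qed.

Lemma eta_theta_b x : c < x < b -> eta b c (theta_b x) = x.
Proof.
intros Hx; pose proof (ratio_in_unit (b - x) (b - c) ltac:(lra)).
unfold eta, theta_b; rewrite sin_shift, cos_sq, sin_asin_sqrt_sq by lra; field; lra.
Qed.

Lemma theta_c_limit : filterlim theta_c (at_right c) (locally 0).
Proof.
replace 0 with (theta_c c)
  by (unfold theta_c; rewrite Rminus_diag, Rdiv_0_l, sqrt_0; apply asin_0).
apply filterlim_within_continuous, continuous_asin_sqrt_ratio_0;
  [solve_continuous; lra | rewrite Rminus_diag; apply Rdiv_0_l].
Qed.

Lemma theta_b_limit : filterlim theta_b (at_left b) (locally (PI / 2)).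
Proof.
replace (PI / 2) with (theta_b b)
  by (unfold theta_b; rewrite Rminus_diag, Rdiv_0_l, sqrt_0, asin_0; ring).
apply filterlim_within_continuous; unfold theta_b; solve_continuous.
apply continuous_asin_sqrt_ratio_0; [solve_continuous; lra | rewrite Rminus_diag; apply Rdiv_0_l].
Qed.

Lemma is_RInt_gen_integrand :
  is_RInt_gen (integrand nu a b c) (at_right c) (at_left b)
    (eta_integral (kernel nu) (fun _ => 1) a b c).
Proof.
set (F := fun t => kernel nu a (eta b c t) * 1).
assert (HF : forall t, continuous F t).
{ apply (continuous_eta_integrand_t nu); auto using continuous_kernel, admissible_ordered.
  intros; apply continuous_const. }
assert (HFint : forall x y, ex_RInt F x y)
  by (intros; apply (ex_RInt_continuous (V := R_CompleteNormedModule)); auto).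
apply filterlimi_lim_ext_loc
  with (f := fun xy : R * R => RInt F (theta_c (fst xy)) (theta_b (snd xy))).
- exists (fun x => c < x < b) (fun x => c < x < b).
  + apply filter_imp with (2 := open_lt b c Hcb); intros; lra.
  + apply filter_imp with (2 := open_gt c b Hcb); intros; lra.
  + intros x y Hx Hy; simpl; unfold F.
    rewrite RInt_integrand_eta, eta_theta_c, eta_theta_b
      by (apply theta_c_range || apply theta_b_range || idtac; assumption).
    apply (RInt_correct (V := R_CompleteNormedModule)),
          (ex_RInt_continuous (V := R_CompleteNormedModule)).
    intros z Hz; apply continuous_integrand, (between_min_max c b x y); auto.
- apply (filterlim_comp_2 (G := locally 0) (H := locally (PI / 2))
           (fun xy : R * R => theta_c (fst xy)) (fun xy : R * R => theta_b (snd xy))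
           (fun x y => RInt F x y)).
  + apply (filterlim_comp _ _ _ fst theta_c _ (at_right c));
      [apply filterlim_fst | apply theta_c_limit].
  + apply (filterlim_comp _ _ _ snd theta_b _ (at_left b));
      [apply filterlim_snd | apply theta_b_limit].
  + intros P HP; apply filter_prod_locally.
    apply (continuous_RInt (V := R_NormedModule) F 0 (PI / 2) (fun x y => RInt F x y));
      [| exact HP].
    apply filter_forall; intros z; apply (RInt_correct (V := R_CompleteNormedModule)); auto.
Qed.

End Substitution.

Definition ordered nu (v : nat -> R) := -nu < v 3%nat /\ v 3%nat < v 2%nat /\ v 2%nat < v 1%nat.

Definition coord (k : nat) := k = 1%nat \/ k = 2%nat \/ k = 3%nat.

(* [u_1] enters the kernel directly, while [u_2] and [u_3] enter through eta,
   with d eta / d u_2 = sin^2 theta and d eta / d u_3 = cos^2 theta. *)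
Definition weight (k : nat) (t : R) : R :=
  match k with 1%nat => 1 | 2%nat => sin t ^ 2 | _ => cos t ^ 2 end.

Definition weight_dd (i j : nat) (t : R) : R :=
  if Nat.eqb i 1 then weight j t
  else if Nat.eqb j 1 then weight i t else sin t ^ 2 * cos t ^ 2.

Definition kernel_d nu (k : nat) := if Nat.eqb k 1 then kernel_a nu else kernel_e nu.

Definition kernel_dd nu (i j : nat) :=
  if (Nat.eqb i 1 || Nat.eqb j 1)%bool then kernel_ae nu else kernel_ee nu.

Definition I_eta nu (v : nat -> R) :=
  eta_integral (kernel nu) (fun _ => 1) (v 1%nat) (v 2%nat) (v 3%nat).

Definition I_eta_d nu (k : nat) (v : nat -> R) :=
  eta_integral (kernel_d nu k) (weight k) (v 1%nat) (v 2%nat) (v 3%nat).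

Definition I_eta_dd nu (i j : nat) (v : nat -> R) :=
  eta_integral (kernel_dd nu i j) (weight_dd i j) (v 1%nat) (v 2%nat) (v 3%nat).

Lemma ordered_admissible nu v : ordered nu v -> admissible nu (v 1%nat) (v 2%nat) (v 3%nat).
Proof. intros (? & ? & ?); repeat split; lra. Qed.

Lemma locally_ordered_upd nu v k :
  coord k -> ordered nu v -> locally (v k) (fun t => ordered nu (upd v k t)).
Proof.
intros Hk (H3 & H2 & H1); unfold ordered, upd.
destruct Hk as [-> | [-> | ->]]; cbn [Nat.eqb].
- apply filter_imp with (2 := open_gt _ _ H1); intros; repeat split; lra.
- apply filter_imp with (2 := filter_and _ _ (open_gt _ _ H2) (open_lt _ _ H1)).
  intros t [? ?]; repeat split; lra.
- apply filter_imp with (2 := filter_and _ _ (open_gt _ _ H3) (open_lt _ _ H2)).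
  intros t [? ?]; repeat split; lra.
Qed.

Lemma continuous_weight k t : continuous (weight k) t.
Proof. unfold weight; destruct k as [| [| [|]]]; cbn; solve_continuous. Qed.

Lemma upd_same (v : nat -> R) k : upd v k (v k) = v.
Proof.
apply functional_extensionality; intros n; unfold upd.
destruct (Nat.eqb_spec n k); congruence.
Qed.

Lemma gamma_upd nu v k t : coord k -> gamma nu (upd v k t) = gamma nu v + (t - v k).
Proof. intros [-> | [-> | ->]]; unfold gamma, upd; cbn [Nat.eqb]; ring. Qed.

Ltac eta_side_goal :=
  first [ assumption | intro; apply continuous_const | intro; apply continuous_weight
        | apply continuous_kernel | apply continuous_kernel_a | apply continuous_kernel_e
        | apply continuous_kernel_ae | apply continuous_kernel_ee
        | apply is_derive_kernel_a | apply is_derive_kernel_e | apply is_derive_kernel_a_e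
        | apply is_derive_kernel_e_a | apply is_derive_kernel_e_e ].

Ltac derive_eta_integral nu :=
  let finish := (eapply is_derive_val;
                 [ eassumption | apply eta_integral_ext_weight; intros; cbn; ring ]) in
  match goal with
  | |- is_derive (fun t => eta_integral ?g ?w t ?b ?c) ?x (eta_integral ?g' _ _ _ _) =>
      assert (is_derive (fun t => eta_integral g w t b c) x (eta_integral g' w x b c))
        by (apply (is_derive_eta_integral_a nu g w); eta_side_goal)
  | |- is_derive (fun t => eta_integral ?g ?w ?a t ?c) ?x (eta_integral ?g' _ _ _ _) =>
      assert (is_derive (fun t => eta_integral g w a t c) x
                (eta_integral g' (fun t => sin t ^ 2 * w t) a x c))
        by (apply (is_derive_eta_integral_b nu g w); eta_side_goal)
  | |- is_derive (fun t => eta_integral ?g ?w ?a ?b t) ?x (eta_integral ?g' _ _ _ _) =>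
      assert (is_derive (fun t => eta_integral g w a b t) x
                (eta_integral g' (fun t => cos t ^ 2 * w t) a b x))
        by (apply (is_derive_eta_integral_c nu g w); eta_side_goal)
  end; finish.

Lemma is_derive_I_eta nu v k :
  coord k -> ordered nu v -> is_derive (fun t => I_eta nu (upd v k t)) (v k) (I_eta_d nu k v).
Proof.
intros Hk Hv; pose proof (ordered_admissible nu v Hv).
unfold I_eta, I_eta_d, kernel_d, upd.
destruct Hk as [-> | [-> | ->]]; cbn [Nat.eqb]; derive_eta_integral nu.
Qed.

Lemma is_derive_I_eta_d nu v i j :
  coord i -> coord j -> i <> j -> ordered nu v ->
  is_derive (fun t => I_eta_d nu i (upd v j t)) (v j) (I_eta_dd nu i j v).
Proof.
intros Hi Hj Hij Hv; pose proof (ordered_admissible nu v Hv).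
unfold I_eta_d, I_eta_dd, kernel_d, kernel_dd, upd.
destruct Hi as [-> | [-> | ->]]; destruct Hj as [-> | [-> | ->]];
  try congruence; cbn [Nat.eqb orb]; derive_eta_integral nu.
Qed.

Lemma I_eta_epd nu v i j :
  coord i -> coord j -> i <> j -> ordered nu v ->
  2 * (v i - v j) * I_eta_dd nu i j v = I_eta_d nu i v - I_eta_d nu j v.
Proof.
intros Hi Hj Hij Hv; pose proof (ordered_admissible nu v Hv) as Hadm.
pose proof (epd_ab nu _ _ _ Hadm); pose proof (epd_ac nu _ _ _ Hadm);
pose proof (epd_bc nu _ _ _ Hadm).
unfold I_eta_d, I_eta_dd, kernel_d, kernel_dd.
destruct Hi as [-> | [-> | ->]]; destruct Hj as [-> | [-> | ->]]; try congruence;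
  cbv beta iota delta [weight weight_dd Nat.eqb orb]; lra.
Qed.

Lemma weight_pos k t : coord k -> 0 < t < PI / 2 -> 0 < weight k t.
Proof.
intros Hk Ht; pose proof PI_RGT_0.
destruct Hk as [-> | [-> | ->]]; cbv beta iota delta [weight]; [lra | |];
  apply pow_lt; [apply sin_gt_0 | apply cos_gt_0]; lra.
Qed.

Lemma I_eta_d_neq0 nu v k : coord k -> ordered nu v -> I_eta_d nu k v <> 0.
Proof.
intros Hk Hv; pose proof (ordered_admissible nu v Hv).
assert (Hw : forall t, 0 < t < PI / 2 -> 0 < weight k t) by (intros; apply weight_pos; auto).
assert (Hwc : forall t, continuous (weight k) t) by (intro; apply continuous_weight).
unfold I_eta_d, kernel_d; destruct Hk as [-> | [-> | ->]]; cbn [Nat.eqb].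
- apply Rlt_not_eq, (eta_integral_neg nu);
    auto using continuous_kernel_a, kernel_a_neg.
- apply Rgt_not_eq, (eta_integral_pos nu); auto using continuous_kernel_e, kernel_e_pos.
- apply Rgt_not_eq, (eta_integral_pos nu); auto using continuous_kernel_e, kernel_e_pos.
Qed.

Lemma Iint_I_eta nu v : ordered nu v -> Iint nu v = I_eta nu v.
Proof. intros (? & ? & ?); apply is_RInt_gen_unique, is_RInt_gen_integrand; assumption. Qed.

Lemma partial_Iint nu v k : coord k -> ordered nu v -> partial (Iint nu) k v = I_eta_d nu k v.
Proof.
intros Hk Hv; unfold partial; apply is_derive_unique.
apply is_derive_ext_loc with (f := fun t => I_eta nu (upd v k t)); [| apply is_derive_I_eta; auto].
apply filter_imp with (2 := locally_ordered_upd nu v k Hk Hv); intros t Ht.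
symmetry; apply Iint_I_eta, Ht.
Qed.

Lemma lambda_I_eta nu v k :
  coord k -> ordered nu v -> lambda nu k v = gamma nu v - I_eta nu v / I_eta_d nu k v.
Proof. intros; unfold lambda; rewrite Iint_I_eta, partial_Iint; auto. Qed.

Lemma partial_lambda nu u i j :
  coord i -> coord j -> i <> j -> ordered nu u ->
  partial (lambda nu i) j u =
  1 - (I_eta_d nu j u * I_eta_d nu i u - I_eta nu u * I_eta_dd nu i j u) / I_eta_d nu i u ^ 2.
Proof.
intros Hi Hj Hij Hu; unfold partial; apply is_derive_unique.
apply is_derive_ext_loc
  with (f := fun t => gamma nu u + (t - u j) - I_eta nu (upd u j t) / I_eta_d nu i (upd u j t)).
- apply filter_imp with (2 := locally_ordered_upd nu u j Hj Hu); intros t Ht.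
  rewrite lambda_I_eta, gamma_upd; auto.
- assert (Hd := is_derive_div (fun t => I_eta nu (upd u j t))
                 (fun t => I_eta_d nu i (upd u j t)) (u j) _ _
                 (is_derive_I_eta nu u j Hj Hu) (is_derive_I_eta_d nu u i j Hi Hj Hij Hu)).
  cbv beta in Hd; rewrite !upd_same in Hd.
  specialize (Hd (I_eta_d_neq0 nu u i Hi Hu)).
  eapply is_derive_val.
  + apply (is_derive_minus (fun t => gamma nu u + (t - u j)) _ _ 1); [| exact Hd].
    auto_derive; [exact I | ring].
  + unfold minus, plus, opp; simpl; field; apply I_eta_d_neq0; auto.
Qed.

Lemma ordered_coord_neq nu u i j : coord i -> coord j -> i <> j -> ordered nu u -> u i <> u j.
Proof.
intros Hi Hj Hij (? & ? & ?).
destruct Hi as [-> | [-> | ->]]; destruct Hj as [-> | [-> | ->]]; try congruence; lra.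
Qed.

Lemma speed_ratio_identity G Gi Gj Gij ui uj gam :
  Gi <> 0 -> Gj <> 0 -> ui <> uj -> 2 * (ui - uj) * Gij = Gi - Gj ->
  gam - G / Gi <> gam - G / Gj ->
  (1 - (Gj * Gi - G * Gij) / Gi ^ 2) / (gam - G / Gi - (gam - G / Gj)) =
  / 2 * ((gam - G / Gi - gam - 2 * (ui - uj)) / ((gam - G / Gj - gam) * (ui - uj))).
Proof.
intros Hi Hj Hu Hepd Hne.
assert (HG : G <> 0) by (intros ->; apply Hne; unfold Rdiv; ring).
assert (Hij : Gi - Gj <> 0) by (intros HGG; apply Hne; replace Gj with Gi by lra; reflexivity).
replace Gij with ((Gi - Gj) / (2 * (ui - uj))).
2: { rewrite <- Hepd; field; lra. }
field; repeat split; auto; try lra.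
replace ((gam * Gi - G) * Gj - (gam * Gj - G) * Gi) with (G * (Gi - Gj)) by ring.
apply Rmult_integral_contrapositive; split; assumption.
Qed.

Theorem lemma2p3 (nu : R) (u : nat -> R) :
  - nu < u 3%nat -> u 3%nat < u 2%nat -> u 2%nat < u 1%nat ->
  forall i j : nat,
    (i = 1%nat \/ i = 2%nat \/ i = 3%nat) ->
    (j = 1%nat \/ j = 2%nat \/ j = 3%nat) ->
    i <> j ->
    lambda nu i u <> lambda nu j u ->
    partial (lambda nu i) j u / (lambda nu i u - lambda nu j u) =
    / 2 * (((lambda nu i u - gamma nu u) - 2 * (u i - u j)) /
           ((lambda nu j u - gamma nu u) * (u i - u j))).
Proof.
intros H3 H2 H1 i j Hi Hj Hij Hne.
assert (Hu : ordered nu u) by (repeat split; assumption).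
rewrite partial_lambda by assumption.
rewrite (lambda_I_eta nu u i), (lambda_I_eta nu u j) in * by assumption.
apply speed_ratio_identity; try assumption.
- apply I_eta_d_neq0; assumption.
- apply I_eta_d_neq0; assumption.
- apply (ordered_coord_neq nu); assumption.
- apply I_eta_epd; assumption.
Qed.
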